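(* For every integer $m\geqslant 1$, the first order binary Reed–Muller code $\mathcal R(1,m)$ is log-concave.
   Context: The binary Reed–Muller code $\mathcal R(1,m)$ is the binary linear code of length $2^m$ consisting of the evaluation vectors $(f(x))_{x\in\mathbb{F}_2^m}$ of all polynomials $f\in\mathbb{F}_2[x_1,\dots,x_m]$ of degree at most $1$. For a linear code of length $n$, $A_i$ is the number of codewords of weight $i$; the nonzero weight distribution is the subsequence $a_0,\dots,a_N$ of $A_0,\dots,A_n$ of its nonzero values, in order; the code is log-concave if $a_i^2\geqslant a_{i-1}a_{i+1}$ for all $1\leqslant i\leqslant N-1$. *)

From mathcomp Require Import all_boot all_order all_algebra.
Set Implicit Arguments. Unset Strict Implicit. Unset Printing Implicit Defensive.
Import GRing.Theory.
Local Open Scope ring_scope.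

(* F_2^m is modelled as 'rV['F_2]_m; a binary word of length 2^m indexed by
   the points of F_2^m is a finite function {ffun 'rV['F_2]_m -> 'F_2}. *)

(* Evaluation vector of the polynomial f(x) = c + sum_i a_i x_i
   (a general polynomial of degree <= 1 over F_2 in x_1..x_m). *)
Definition affine_eval (m : nat) (a : 'rV['F_2]_m) (c : 'F_2)
  : {ffun 'rV['F_2]_m -> 'F_2} :=
  [ffun x : 'rV['F_2]_m => c + \sum_(i < m) a ord0 i * x ord0 i].

Definition RM1 (m : nat) : {set {ffun 'rV['F_2]_m -> 'F_2}} :=
  [set v | [exists a : 'rV['F_2]_m, exists c : 'F_2, v == affine_eval a c]].

Definition wt (I : finType) (v : {ffun I -> 'F_2}) : nat := #|[set x | v x != 0]|.

Definition A_coeff (I : finType) (C : {set {ffun I -> 'F_2}}) (i : nat) : nat :=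
  #|[set v in C | wt v == i]|.

Definition nz_weight_distribution (I : finType) (C : {set {ffun I -> 'F_2}})
  : seq nat :=
  [seq a <- [seq A_coeff C i | i <- iota 0 #|I|.+1] | a != 0%N].

Definition log_concave (I : finType) (C : {set {ffun I -> 'F_2}}) : Prop :=
  let s := nz_weight_distribution C in
  forall i : nat, (1 <= i)%N -> (i <= (size s).-1 - 1)%N ->
    (nth 0%N s i.-1 * nth 0%N s i.+1 <= (nth 0%N s i) ^ 2)%N.

(* An affine function x |-> c + a.x with a <> 0 is balanced: translating x
   along a coordinate j with a_j = 1 swaps its zeros and ones.  Hence the
   codewords of R(1,m) have weight 0 (only the zero word), 2^(m-1), or 2^m
   (only the all-one word), so for m >= 1 the nonzero weight distribution is
   [:: 1; A_(2^(m-1)); 1], which is trivially log-concave. *)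

From mathcomp Require Import all_boot all_order all_algebra.
Set Implicit Arguments. Unset Strict Implicit. Unset Printing Implicit Defensive.
Import GRing.Theory.
Local Open Scope ring_scope.

Lemma F2_neq0 (x : 'F_2) : (x != 0) = (x == 1).
Proof. by case: x => [[|[|k]] //] ?; apply/eqP; rewrite /= eqE. Qed.

Lemma filter_iota_sorted (f : nat -> nat) (n : nat) (s : seq nat) :
    sorted ltn s -> (forall i, (i \in s) = (i <= n)%N && (f i != 0)%N) ->
  [seq a <- [seq f i | i <- iota 0 n.+1] | a != 0%N] = [seq f i | i <- s].
Proof.
move=> s_sorted s_supp; rewrite filter_map; congr map.
apply: (irr_sorted_eq ltn_trans ltnn) => //.
  exact: sorted_filter ltn_trans _ _ (iota_ltn_sorted _ _).
by move=> i; rewrite mem_filter mem_iota add0n ltnS s_supp andbC.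
Qed.

Section HammingWeight.
Variable I : finType.
Implicit Types (v f : {ffun I -> 'F_2}) (C : {set {ffun I -> 'F_2}}).

Lemma wt_eq0 v : (wt v == 0%N) = (v == 0).
Proof.
rewrite /wt cards_eq0; apply/eqP/eqP => [v0|->].
  by apply/ffunP => x; rewrite ffunE; apply/eqP/negbFE; rewrite -(in_set0 x) -v0 inE.
by apply/setP => x; rewrite !inE ffunE eqxx.
Qed.

Lemma wt0 : wt (0 : {ffun I -> 'F_2}) = 0%N.
Proof. by apply/eqP; rewrite wt_eq0. Qed.

Lemma wt_eq_card v : (wt v == #|I|) = (v == [ffun=> 1]).
Proof.
rewrite /wt; set S := [set x | v x != 0].
have -> : (#|S| == #|I|) = (S == setT).
  by rewrite eqEcard subsetT -cardsT eqn_leq subset_leq_card ?subsetT.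
apply/eqP/eqP => [ST|v1]; last by apply/setP => x; rewrite !inE v1 ffunE.
by apply/ffunP => x; have := in_setT x; rewrite -ST inE F2_neq0 ffunE => /eqP.
Qed.

Lemma wt1 : wt ([ffun=> 1] : {ffun I -> 'F_2}) = #|I|.
Proof. by apply/eqP; rewrite wt_eq_card. Qed.

Lemma wt_flip f (g : I -> I) :
  injective g -> (forall x, f (g x) = f x + 1) -> (wt f).*2 = #|I|.
Proof.
move=> g_inj f_flip; set S := [set x | f x != 0].
have gS : g @: S \subset ~: S.
  by apply/subsetP => _ /imsetP[x + ->]; rewrite !inE negbK f_flip F2_neq0 => /eqP->.
have gSC : g @: (~: S) \subset S.
  by apply/subsetP => _ /imsetP[x + ->]; rewrite !inE negbK f_flip F2_neq0 => /eqP->.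
have SC : #|S| = #|~: S|.
  apply/eqP; rewrite eqn_leq.
  by rewrite -{1}(card_imset S g_inj) -{2}(card_imset (~: S) g_inj) !subset_leq_card.
by rewrite /wt -/S -addnn {2}SC cardsC.
Qed.

Lemma A_coeff_gt0 C v : v \in C -> (0 < A_coeff C (wt v))%N.
Proof. by move=> vC; rewrite card_gt0; apply/set0Pn; exists v; rewrite inE vC eqxx. Qed.

Lemma A_coeff_eq0 C i : (forall v, v \in C -> wt v != i) -> A_coeff C i = 0%N.
Proof.
move=> wtC; apply/eqP; rewrite cards_eq0; apply/eqP/setP => v.
by rewrite !inE; apply/negbTE; apply/andP => -[/wtC/negbTE->].
Qed.

Lemma A_coeff_eq1 C i v0 :
  v0 \in C -> wt v0 = i -> (forall v, wt v = i -> v = v0) -> A_coeff C i = 1%N.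
Proof.
move=> v0C <- wt_v0; apply/anti_leq; rewrite A_coeff_gt0 // andbT -(cards1 v0).
by apply/subset_leq_card/subsetP => v; rewrite !inE => /andP[_ /eqP/wt_v0->].
Qed.

Lemma log_concave3 C x y z :
  nz_weight_distribution C = [:: x; y; z] -> (x * z <= y ^ 2)%N -> log_concave C.
Proof.
by rewrite /log_concave => -> xz [|[|i]] // _; rewrite leqn0.
Qed.

End HammingWeight.

Section FirstOrderReedMuller.
Variable m : nat.
Local Notation I := 'rV['F_2]_m.

Lemma affine_eval_in_RM1 (a : I) c : affine_eval a c \in RM1 m.
Proof. by rewrite inE; apply/existsP; exists a; apply/existsP; exists c. Qed.

Lemma affine_eval0 c : affine_eval (0 : I) c = [ffun=> c].
Proof. by apply/ffunP => x; rewrite !ffunE big1 ?addr0 // => i _; rewrite mxE mul0r. Qed.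

Lemma RM1_0 : 0 \in RM1 m.
Proof. by move: (affine_eval_in_RM1 0 0); rewrite affine_eval0. Qed.

Lemma RM1_1 : [ffun=> 1] \in RM1 m.
Proof. by rewrite -affine_eval0 affine_eval_in_RM1. Qed.

Lemma affine_eval_delta (a : I) c x j :
  affine_eval a c (x + delta_mx 0 j) = affine_eval a c x + a 0 j.
Proof.
rewrite !ffunE -addrA; congr (_ + _).
under eq_bigr => i _ do rewrite mxE mulrDr.
rewrite big_split /=; congr (_ + _).
rewrite (bigD1 j) //= big1 => [|i /negbTE ij]; first by rewrite mxE !eqxx mulr1 addr0.
by rewrite mxE ij andbF mulr0.
Qed.

Lemma wt_affine_eval (a : I) c : a != 0 -> (wt (affine_eval a c)).*2 = #|I|.
Proof.
move=> a_neq0; have [j aj] : exists j, a 0 j == 1.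
  apply/existsP; apply: contraR a_neq0; rewrite negb_exists => /forallP a0.
  by apply/eqP/rowP => j; rewrite mxE; apply/eqP/negbNE; rewrite F2_neq0 a0.
apply: (@wt_flip _ _ (+%R^~ (delta_mx 0 j))); first exact: addIr.
by move=> x; rewrite affine_eval_delta (eqP aj).
Qed.

Lemma wt_RM1 v : v \in RM1 m -> wt v \in [:: 0%N; #|I|./2; #|I|].
Proof.
rewrite inE => /existsP[a /existsP[c /eqP->]]; rewrite !inE.
have [->|a_neq0] := eqVneq a 0; last first.
  by rewrite -(wt_affine_eval c a_neq0) half_double eqxx orbT.
rewrite affine_eval0; case: (eqVneq c 0) => [->|]; last first.
  by rewrite F2_neq0 => /eqP->; rewrite wt1 eqxx !orbT.
by rewrite wt0 eqxx.
Qed.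

End FirstOrderReedMuller.

Theorem mainTheorem12 (m : nat) : (1 <= m)%N -> log_concave (RM1 m).
Proof.
move=> m_gt0; set C := RM1 m; set n := #|'rV['F_2]_m|; set h := n./2.
have n_eq : n = (2 ^ m.-1).*2.
  by rewrite /n card_mx card_Fp // mul1n -{1}(prednK m_gt0) expnS mul2n.
have a1_neq0 : const_mx 1 != 0 :> 'rV['F_2]_m.
  by apply/eqP => /rowP/(_ (Ordinal m_gt0)); rewrite !mxE.
have A0 : A_coeff C 0 = 1%N.
  by apply: A_coeff_eq1 (RM1_0 m) (wt0 _) _ => v /eqP; rewrite wt_eq0 => /eqP.
have An : A_coeff C n = 1%N.
  by apply: A_coeff_eq1 (RM1_1 m) (wt1 _) _ => v /eqP; rewrite wt_eq_card => /eqP.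
have Ah : (0 < A_coeff C h)%N.
  by rewrite /h /n -(wt_affine_eval 0 a1_neq0) half_double A_coeff_gt0 ?affine_eval_in_RM1.
apply: (@log_concave3 _ _ 1%N (A_coeff C h) 1%N); last by rewrite expn_gt0 Ah.
rewrite /nz_weight_distribution -/n (@filter_iota_sorted _ n [:: 0%N; h; n]) /= ?A0 ?An //.
  by rewrite /= /h n_eq half_double -muln2 ltn_Pmulr ?expn_gt0.
move=> i; apply/idP/andP => [|[_]]; last first.
  apply: contraR => i_notin; rewrite A_coeff_eq0 // => v /wt_RM1.
  by apply: contraTneq => ->.
rewrite !inE => /or3P[]/eqP->; rewrite ?A0 ?An ?leqnn ?(lt0n_neq0 Ah) //.
by rewrite /h n_eq half_double -addnn leq_addr.
Qed.
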